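(* Let $N$ be a positive integer and let the edges of the complete $4$-uniform hypergraph $\mathcal{K}^4_N$ be colored red and blue. Let $\mathcal{P}=e_1e_2\ldots e_n$ be a red loose path which is maximal with respect to a set $W\subseteq V(\mathcal{K}^4_N)\setminus V(\mathcal{P})$ with $|W|\ge 4$. Then for every two consecutive edges $e_j,e_{j+1}$ of $\mathcal{P}$ there exist distinct vertices $x,y\in W$ and distinct vertices $a_1,\dots,a_5\in e_j\cup e_{j+1}$ such that the edges $f=\{x,a_1,a_2,a_3\}$ and $g=\{a_3,a_4,a_5,y\}$ are both blue (so $fg$ is a blue loose path with two edges), and at least one vertex of $e_{j+1}\setminus e_j$ does not belong to $S=\{a_1,\dots,a_5\}$. Moreover, there are subsets $W_1,W_2\subseteq W$ with $|W_1|\ge |W|-2$ and $|W_2|\ge |W|-3$ such that for all distinct $x'\in W_1$ and $y'\in W_2$ the edges $(f\setminus\{x\})\cup\{x'\}$ and $(g\setminus\{y\})\cup\{y'\}$ are both blue.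
   Context: A $4$-uniform loose path $\mathcal{P}=e_1e_2\ldots e_n$ (a copy of $\mathcal{P}^4_n$) has vertex set $\{v_1,\dots,v_{3n+1}\}$ and edges $e_i=\{v_{3i-2},v_{3i-1},v_{3i},v_{3i+1}\}$, $1\le i\le n$; the first vertex of $e_i$ is $f_{\mathcal{P},e_i}=v_{3i-2}$ and its last vertex is $l_{\mathcal{P},e_i}=v_{3i+1}$. A red path is one all of whose edges are red; $\|\mathcal{P}\|$ denotes the number of edges. A red path $\mathcal{P}=e_1\ldots e_n$ is maximal with respect to $W\subseteq V\setminus V(\mathcal{P})$ if there is no $W'\subseteq W$, no $1\le r\le n$ and no $1\le i\le n-r+1$ such that $\mathcal{P}'=e_1\ldots e_{i-1}e'_ie'_{i+1}\ldots e'_{i+r}e_{i+r}\ldots e_n$ (the edges $e_i,\dots,e_{i+r-1}$ replaced by $r+1$ new edges $e'_i,\dots,e'_{i+r}$) is a red loose path with $n+1$ edges satisfying: (i) $V(\mathcal{P}')=V(\mathcal{P})\cup W'$; (ii) if $i=1$ then $f_{\mathcal{P}',e'_i}=f_{\mathcal{P},e_i}$; (iii) if $i+r-1=n$ then $l_{\mathcal{P}',e'_{i+r}}=l_{\mathcal{P},e_n}$. *)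

From mathcomp Require Import all_boot.
Set Implicit Arguments. Unset Strict Implicit. Unset Printing Implicit Defensive.

(* Vertices of K^4_N are 'I_N.  A 2-colouring of the edges (4-subsets) is a
   map [red : {set 'I_N} -> bool]; an edge e is red iff [red e], blue iff
   [~~ red e].  Only its values on 4-subsets matter. *)

(* A loose path P = e_1 ... e_n is given by its vertex sequence
   s = [v_1; ...; v_{3n+1}].  [pedge s i] is the edge e_i (1-indexed):
   {v_{3i-2}, v_{3i-1}, v_{3i}, v_{3i+1}}. *)
Definition pedge (N : nat) (s : seq 'I_N) (i : nat) : {set 'I_N} :=
  [set x in take 4 (drop (3 * i.-1) s)].

Definition red_loose_path (N : nat) (red : {set 'I_N} -> bool)
    (s : seq 'I_N) (n : nat) : Prop :=
  [/\ uniq s, size s = 3 * n + 1 & forall i, 1 <= i <= n -> red (pedge s i)].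

(* Maximality of the red path s (with n edges) with respect to W, as in the
   paper: there is no W' ⊆ W, 1 <= r <= n, 1 <= i <= n-r+1 and red loose
   path P' (vertex sequence s') with n+1 edges, whose edges are
   e_1..e_{i-1}, e'_i..e'_{i+r}, e_{i+r}..e_n, with V(P') = V(P) ∪ W',
   first vertex preserved if i = 1 and last vertex preserved if i+r-1 = n. *)
Definition maximal_wrt (N : nat) (red : {set 'I_N} -> bool)
    (s : seq 'I_N) (n : nat) (W : {set 'I_N}) : Prop :=
  ~ exists (W' : {set 'I_N}) (s' : seq 'I_N) (r i : nat),
      [/\ W' \subset W, 1 <= r <= n, 1 <= i <= n - r + 1
        & red_loose_path red s' n.+1 ] /\
      [/\ (forall p, 1 <= p <= i - 1 -> pedge s' p = pedge s p),
          (forall p, i + r + 1 <= p <= n + 1 -> pedge s' p = pedge s p.-1),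
          [set x in s'] = [set x in s] :|: W',
          (i = 1 -> forall v, head v s' = head v s)
        & (i + r - 1 = n -> forall v, last v s' = last v s)].

From mathcomp Require Import all_boot zify ring.
Set Implicit Arguments. Unset Strict Implicit. Unset Printing Implicit Defensive.

(* Write e_j = {v0,v1,v2,v3}, e_(j+1) = {v3,v4,v5,v6}, and for a triple T of these
   vertices let C(T) be the set of w in W such that T + w is red.  For a permutation
   (k1,...,k5) of 1..5, distinct x1 in C{v0,vk3,vk1}, x2 in C{vk1,vk4,vk2} and
   x3 in C{vk2,vk5,v6} would let us replace e_j e_(j+1) by the three red edges
   {v0,vk3,x1,vk1} {vk1,vk4,x2,vk2} {vk2,vk5,x3,v6}, against maximality; so when
   the two outer sets have at least three elements the middle one is empty.
   It then suffices to find triples T1, T2 sharing one vertex, missing one of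
   v4, v5, v6, with |C(T1)| <= 2 and |C(T2)| <= 3: x and y are taken from
   W \ C(T1) and W \ C(T2), which also serve as W1 and W2. *)

Lemma take_drop_mkseq (T : Type) (x0 : T) (s : seq T) k m :
  k + m <= size s -> take m (drop k s) = mkseq (fun i => nth x0 s (k + i)) m.
Proof.
move=> km; apply: (@eq_from_nth _ x0) => [|i].
  by rewrite size_mkseq size_takel // size_drop leq_subRL // (leq_trans _ km) ?leq_addr.
rewrite size_takel ?size_drop ?leq_subRL // ?(leq_trans _ km) ?leq_addr // => lt_im.
by rewrite nth_take // nth_drop nth_mkseq.
Qed.

Lemma pedge_cat (N : nat) (A B : seq 'I_N) p :
  size A <= 3 * p.-1 -> pedge (A ++ B) p = [set x in take 4 (drop (3 * p.-1 - size A) B)].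
Proof. by move=> leA; rewrite /pedge drop_cat ltnNge leA. Qed.

Lemma pedge_cat_prefix (N : nat) (A B B' : seq 'I_N) p :
  3 * p.-1 + 4 <= size A -> pedge (A ++ B) p = pedge (A ++ B') p.
Proof. by move=> leA; rewrite /pedge !take_drop !takel_cat // addnC. Qed.

Lemma pedge_cat_shift (N : nat) (X Y C : seq 'I_N) p :
  size X = (size Y).+3 -> size X <= 3 * p.-1 -> pedge (X ++ C) p = pedge (Y ++ C) p.-1.
Proof.
move=> szX leX; rewrite !pedge_cat //; last by move: leX; rewrite szX; lia.
by rewrite (_ : 3 * p.-2 - size Y = 3 * p.-1 - size X) //; lia.
Qed.

Lemma exists_distinct3 (T : finType) (A B C : {set T}) :
  0 < #|B| -> 1 < #|A| -> 2 < #|C| ->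
  exists x y z, [/\ x \in A, y \in B, z \in C & uniq [:: x; y; z]].
Proof.
move=> /card_gt0P [y yB] A_gt1 C_gt2.
have /card_gt0P [x] : 0 < #|A :\ y| by rewrite (cardsD1 y A) in A_gt1; lia.
rewrite !inE => /andP [xy xA].
have /card_gt0P [z] : 0 < #|C :\ x :\ y|.
  by move: C_gt2; rewrite (cardsD1 x C) (cardsD1 y (C :\ x)); lia.
rewrite !inE => /and3P [zy zx zC].
by exists x, y, z; rewrite /= !inE !negb_or xy ![_ == z]eq_sym zx zy.
Qed.

Lemma set_seq_third (T : finType) (a b x c : T) :
  [set y in [:: a; b; x; c]] = x |: [set y in [:: a; b; c]].
Proof. by apply/setP => y; rewrite !inE; do !case: (_ == _). Qed.

Lemma set4_first (T : finType) (x a b c : T) :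
  [set x; a; b; c] = x |: [set y in [:: a; b; c]].
Proof. by apply/setP => y; rewrite !inE; do !case: (_ == _). Qed.

Lemma set4_last (T : finType) (a b c x : T) :
  [set a; b; c; x] = x |: [set y in [:: a; b; c]].
Proof. by apply/setP => y; rewrite !inE; do !case: (_ == _). Qed.

Section ConsecutiveEdges.

Variables (N : nat) (red : {set 'I_N} -> bool) (s : seq 'I_N) (n : nat)
  (W : {set 'I_N}) (x0 : 'I_N) (j : nat).
Hypotheses (s_uniq : uniq s) (size_s : size s = 3 * n + 1)
  (s_red : forall i, 1 <= i <= n -> red (pedge s i))
  (W_s : [disjoint W & [set x in s]]) (s_max : maximal_wrt red s n W)
  (j_gt0 : 0 < j) (j_lt_n : j < n).

Definition v k := nth x0 s (3 * j.-1 + k).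
Definition vset (t : seq nat) : {set 'I_N} := [set y in map v t].
Definition completions t := [set w in W | red (w |: vset t)].

Lemma s_decomp : s = take (3 * j.-1) s ++ mkseq v 6 ++ v 6 :: drop (3 * j.-1 + 7) s.
Proof.
rewrite -{1}(cat_take_drop (3 * j.-1) s) -{1}(cat_take_drop 7 (drop _ s)).
by rewrite drop_drop (take_drop_mkseq x0) 1?addnC // size_s; lia.
Qed.

Lemma size_take_s : size (take (3 * j.-1) s) = 3 * j.-1.
Proof. by rewrite size_takel // size_s; lia. Qed.

Lemma v_eq a b : a < 7 -> b < 7 -> (v a == v b) = (a == b).
Proof. by move=> a7 b7; rewrite nth_uniq ?eqn_add2l // size_s; lia. Qed.

Lemma v_notin_W k : k < 7 -> v k \notin W.
Proof.
by move=> k7; rewrite (disjointFl W_s) // inE mem_nth // size_s; lia.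
Qed.

Lemma pedge_j : pedge s j = vset [:: 0; 1; 2; 3].
Proof. by rewrite {1}s_decomp pedge_cat size_take_s // subnn. Qed.

Lemma pedge_j1 : pedge s j.+1 = vset [:: 3; 4; 5; 6].
Proof.
rewrite {1}s_decomp pedge_cat size_take_s; last lia.
have -> : 3 * j.+1.-1 - 3 * j.-1 = 3 by lia.
by rewrite /= take0.
Qed.

Lemma completions_perm t t' : perm_eq t t' -> completions t = completions t'.
Proof.
move=> tt'; apply/setP => w; rewrite !inE /vset.
suff -> : [set y in map v t] = [set y in map v t'] by [].
by apply/setP => y; rewrite !inE (perm_mem (perm_map v tt')).
Qed.

Lemma W_notin_s w : w \in W -> w \notin s.
Proof. by move=> /(disjointFr W_s); rewrite inE => ->. Qed.

Lemma completions_sub t : completions t \subset W.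
Proof. by apply/subsetP => w; rewrite inE => /andP []. Qed.

Section Splice.

Variables (k1 k2 k3 k4 k5 : nat) (x1 x2 x3 : 'I_N).
Hypotheses (k_perm : perm_eq [:: k1; k2; k3; k4; k5] [:: 1; 2; 3; 4; 5])
  (x1_comp : x1 \in completions [:: 0; k3; k1])
  (x2_comp : x2 \in completions [:: k1; k4; k2])
  (x3_comp : x3 \in completions [:: k2; k5; 6])
  (x_uniq : uniq [:: x1; x2; x3]).

Definition spliced := take (3 * j.-1) s ++
  [:: v 0; v k3; x1; v k1; v k4; x2; v k2; v k5; x3] ++ v 6 :: drop (3 * j.-1 + 7) s.

Lemma spliced_perm : perm_eq spliced (s ++ [:: x1; x2; x3]).
Proof.
have vk : perm_eq [:: v k3; v k1; v k4; v k2; v k5] [:: v 1; v 2; v 3; v 4; v 5].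
  have k' : perm_eq [:: k3; k1; k4; k2; k5] [:: k1; k2; k3; k4; k5].
    by apply/permP => P /=; ring.
  by have /= := perm_map v (perm_trans k' k_perm).
rewrite [in X in perm_eq _ X]s_decomp -!catA perm_cat2l /= perm_cons.
apply: (@perm_trans _ ([:: v k3; v k1; v k4; v k2; v k5] ++ v 6 :: drop (3 * j.-1 + 7) s ++ [:: x1; x2; x3])).
  by apply/permP => P /=; rewrite !count_cat /=; ring.
exact: perm_cat vk (perm_refl _).
Qed.

Lemma spliced_prefix p : 0 < p <= j - 1 -> pedge spliced p = pedge s p.
Proof.
move=> hp; rewrite /spliced [in RHS]s_decomp /= -[in LHS]cat_rcons -[in RHS]cat_rcons.
by apply: pedge_cat_prefix; rewrite size_rcons size_take_s; lia.
Qed.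

Lemma spliced_suffix p : j + 2 + 1 <= p <= n + 1 -> pedge spliced p = pedge s p.-1.
Proof.
move=> hp; rewrite /spliced [in RHS]s_decomp !catA.
by apply: pedge_cat_shift; rewrite !size_cat size_take_s //=; lia.
Qed.

Lemma spliced_red : red_loose_path red spliced n.+1.
Proof.
have x_notin_s t x : x \in completions t -> x \notin s.
  by move=> /(subsetP (completions_sub t)); apply: W_notin_s.
have x_red t x : x \in completions t -> red (x |: vset t) by rewrite inE => /andP [].
split=> [|| p hp].
- rewrite (perm_uniq spliced_perm) cat_uniq s_uniq x_uniq /= !orbF !negb_or.
  by rewrite (x_notin_s _ _ x1_comp) (x_notin_s _ _ x2_comp) (x_notin_s _ _ x3_comp).
- by rewrite !size_cat size_take_s /= size_drop size_s; lia.
have [p_lt_j|j_le_p] := ltnP p j; first by rewrite spliced_prefix ?s_red; lia.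
have [p_gt|p_le] := ltnP (j + 2) p; first by rewrite spliced_suffix ?s_red; lia.
have mid_edge m : m < 3 -> pedge spliced (j + m) =
    [set y in take 4 (drop (3 * m) [:: v 0; v k3; x1; v k1; v k4; x2; v k2; v k5; x3; v 6])].
  move=> m3; rewrite /spliced pedge_cat size_take_s; last lia.
  have -> : 3 * (j + m).-1 - 3 * j.-1 = 3 * m by lia.
  by case: m m3 => [|[|[|]]] // _ /=; rewrite take0.
have : p \in [:: j + 0; j + 1; j + 2] by rewrite !inE; lia.
rewrite !inE => /or3P [] /eqP ->; rewrite mid_edge //= set_seq_third;
  [exact: x_red _ _ x1_comp | exact: x_red _ _ x2_comp | exact: x_red _ _ x3_comp].
Qed.

Lemma no_transversal : False.
Proof.
apply: s_max; exists [set x1; x2; x3], spliced, 2, j; split; split.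
- apply/subsetP => y; rewrite !inE -orbA => /or3P [] /eqP ->;
    apply: (subsetP (completions_sub _)); eassumption.
- lia.
- lia.
- exact: spliced_red.
- exact: spliced_prefix.
- exact: spliced_suffix.
- by apply/setP => y; rewrite inE (perm_mem spliced_perm) !inE mem_cat !inE -!orbA.
- by move=> _ w; rewrite /spliced [in RHS]s_decomp; case: (take _ s).
- by move=> _ w; rewrite /spliced [in RHS]s_decomp !catA !last_cat.
Qed.

End Splice.

Lemma config_middle_empty k1 k2 k3 k4 k5 tA tB tC :
  perm_eq [:: k1; k2; k3; k4; k5] [:: 1; 2; 3; 4; 5] ->
  perm_eq tA [:: 0; k3; k1] -> perm_eq tB [:: k1; k4; k2] -> perm_eq tC [:: k2; k5; 6] ->
  2 < #|completions tA| -> 2 < #|completions tC| -> #|completions tB| = 0.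
Proof.
move=> k_perm /completions_perm -> /completions_perm -> /completions_perm -> A_gt2 C_gt2.
apply/eqP; rewrite -leqn0 leqNgt; apply/negP => B_gt0.
have [x1 [x2 [x3 [x1A x2B x3C x_uniq]]]] := exists_distinct3 B_gt0 (ltnW A_gt2) C_gt2.
exact: no_transversal k_perm x1A x2B x3C x_uniq.
Qed.

Lemma mem_map_v k t : k < 7 -> all (gtn 7) t -> (v k \in map v t) = (k \in t).
Proof.
move=> k7 /allP t7; apply/mapP/idP => [[k' k't /eqP]|]; last by exists k.
have k'7 : k' < 7 := t7 k' k't.
by rewrite v_eq // => /eqP ->.
Qed.

Lemma v_in_edges k : k < 7 -> v k \in pedge s j :|: pedge s j.+1.
Proof.
move=> k7; rewrite pedge_j pedge_j1 in_setU !in_set !mem_map_v //.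
by case: k k7 => [|[|[|[|[|[|[|]]]]]]].
Qed.

Lemma W_notin_vset w t : w \in W -> all (gtn 7) t -> w \notin vset t.
Proof.
move=> wW /allP t7; apply/negP; rewrite inE => /mapP [k /t7 k7 wk].
by move: wW; rewrite wk (negbTE (v_notin_W k7)).
Qed.

Hypothesis W_ge4 : 4 <= #|W|.

Definition blue_two_path : Prop :=
  exists (x y a1 a2 a3 a4 a5 : 'I_N),
    [/\ x \in W, y \in W, x != y,
        uniq [:: a1; a2; a3; a4; a5] &
        all (fun a => a \in pedge s j :|: pedge s j.+1) [:: a1; a2; a3; a4; a5]] /\
    [/\ ~~ red [set x; a1; a2; a3],
        ~~ red [set a3; a4; a5; y],
        (exists v, [/\ v \in pedge s j.+1, v \notin pedge s j &
                       v \notin [:: a1; a2; a3; a4; a5]]) &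
        exists W1 W2 : {set 'I_N},
          [/\ W1 \subset W, W2 \subset W, #|W| - 2 <= #|W1|, #|W| - 3 <= #|W2| &
              forall x' y', x' \in W1 -> y' \in W2 -> x' != y' ->
                ~~ red (([set x; a1; a2; a3] :\ x) :|: [set x']) /\
                ~~ red (([set a3; a4; a5; y] :\ y) :|: [set y'])]].

Lemma card_W_completions t : #|W :\: completions t| = #|W| - #|completions t|.
Proof. by rewrite cardsD (setIidPr (completions_sub t)). Qed.

Lemma exists_outside_completions t1 t2 :
  #|completions t1| <= 2 -> #|completions t2| <= 3 ->
  exists x y, [/\ x \in W :\: completions t1, y \in W :\: completions t2 & x != y].
Proof.
move=> c1 c2; have /card_gt0P [y yW2] : 0 < #|W :\: completions t2|.
  by rewrite card_W_completions; lia.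
have /card_gt0P [x] : 0 < #|(W :\: completions t1) :\ y|.
  by move: (cardsD1 y (W :\: completions t1)); rewrite card_W_completions; lia.
by rewrite in_setD1 => /andP [xy xW1]; exists x, y.
Qed.

Lemma blue_pair a1 a2 a3 a4 a5 t1 t2 :
  #|completions t1| <= 2 -> #|completions t2| <= 3 ->
  perm_eq t1 [:: a1; a2; a3] -> perm_eq t2 [:: a3; a4; a5] ->
  uniq [:: a1; a2; a3; a4; a5] -> all (gtn 7) [:: a1; a2; a3; a4; a5] ->
  has (fun k => k \notin [:: a1; a2; a3; a4; a5]) [:: 4; 5; 6] -> blue_two_path.
Proof.
move=> c1 c2 /completions_perm t1E /completions_perm t2E a_uniq a7 /hasP [z z456 z_notin].
rewrite {}t1E in c1; rewrite {}t2E in c2.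
have [x [y [xW1 yW2 xy]]] := exists_outside_completions c1 c2.
have blue t w : w \in W :\: completions t -> ~~ red (w |: vset t).
  by rewrite !inE => /andP []; case: (w \in W).
have [xW yW] : x \in W /\ y \in W by split; [move: xW1 | move: yW2]; rewrite inE => /andP [].
have [z7 z_j1 z_j] : [/\ z < 7, z \in [:: 3; 4; 5; 6] & z \notin [:: 0; 1; 2; 3]].
  by move: z456; rewrite !inE => /or3P [] /eqP ->.
have [t1_7 t2_7] : all (gtn 7) [:: a1; a2; a3] /\ all (gtn 7) [:: a3; a4; a5].
  by case/and5P: a7 => /= -> -> -> -> ->.
exists x, y, (v a1), (v a2), (v a3), (v a4), (v a5); split; first split => //.
- rewrite -[[:: v a1; _; _; _; _]]/(map v [:: a1; a2; a3; a4; a5]).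
  rewrite map_inj_in_uniq // => a b /(allP a7) a_lt /(allP a7) b_lt /eqP.
  by rewrite v_eq // => /eqP.
- rewrite -[[:: v a1; _; _; _; _]]/(map v [:: a1; a2; a3; a4; a5]) all_map.
  by apply/allP => a /(allP a7); apply: v_in_edges.
split.
- by rewrite set4_first; apply: (blue [:: a1; a2; a3]).
- by rewrite set4_last; apply: (blue [:: a3; a4; a5]).
- exists (v z); rewrite pedge_j pedge_j1 !in_set.
  by rewrite -[[:: v a1; _; _; _; _]]/(map v [:: a1; a2; a3; a4; a5]) !mem_map_v.
exists (W :\: completions [:: a1; a2; a3]), (W :\: completions [:: a3; a4; a5]).
split; rewrite ?subsetDl ?card_W_completions ?leq_sub2l //.
move=> x' y' x'W1 y'W2 _; split.
- rewrite set4_first setU1K; last exact: W_notin_vset xW t1_7.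
  by rewrite setUC; apply: (blue [:: a1; a2; a3]).
- rewrite set4_last setU1K; last exact: W_notin_vset yW t2_7.
  by rewrite setUC; apply: (blue [:: a3; a4; a5]).
Qed.

(* Indices are those of v.  The partners {0,2,5}, {1,2,3}, {3,4,6} of {0,1,4} form a
   configuration, so one of them has at most 3 completions; likewise {0,2,4}, {1,3,4},
   {1,5,6} for {2,3,6}.  If neither {0,1,4} nor {2,3,6} has at most 2, they are the
   outer triples of two configurations whose middles {1,2,5} and {3,4,5} are then
   empty, and these two form a pair. *)
Lemma blue_two_path_holds : blue_two_path.
Proof.
have [a_le|a_gt] := leqP #|completions [:: 0; 1; 4]| 2.
  have [d_le|d_gt] := leqP #|completions [:: 0; 2; 5]| 3.
    exact: (@blue_pair 1 4 0 2 5 _ _ a_le d_le isT isT isT isT isT).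
  have [f_le|f_gt] := leqP #|completions [:: 3; 4; 6]| 3.
    exact: (@blue_pair 0 1 4 3 6 _ _ a_le f_le isT isT isT isT isT).
  have e0 := @config_middle_empty 2 3 5 1 4 [:: 0; 2; 5] [:: 1; 2; 3] [:: 3; 4; 6]
    isT isT isT isT (ltnW d_gt) (ltnW f_gt).
  have e_le : #|completions [:: 1; 2; 3]| <= 3 by rewrite e0.
  exact: (@blue_pair 0 4 1 2 3 _ _ a_le e_le isT isT isT isT isT).
have [c_le|c_gt] := leqP #|completions [:: 2; 3; 6]| 2.
  have [g_le|g_gt] := leqP #|completions [:: 0; 2; 4]| 3.
    exact: (@blue_pair 3 6 2 0 4 _ _ c_le g_le isT isT isT isT isT).
  have [i_le|i_gt] := leqP #|completions [:: 1; 5; 6]| 3.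
    exact: (@blue_pair 2 3 6 1 5 _ _ c_le i_le isT isT isT isT isT).
  have h0 := @config_middle_empty 4 1 2 3 5 [:: 0; 2; 4] [:: 1; 3; 4] [:: 1; 5; 6]
    isT isT isT isT (ltnW g_gt) (ltnW i_gt).
  have h_le : #|completions [:: 1; 3; 4]| <= 3 by rewrite h0.
  exact: (@blue_pair 2 6 3 1 4 _ _ c_le h_le isT isT isT isT isT).
have b0 := @config_middle_empty 1 2 4 5 3 [:: 0; 1; 4] [:: 1; 2; 5] [:: 2; 3; 6]
  isT isT isT isT a_gt c_gt.
have k0 := @config_middle_empty 4 3 1 5 2 [:: 0; 1; 4] [:: 3; 4; 5] [:: 2; 3; 6]
  isT isT isT isT a_gt c_gt.
have b_le : #|completions [:: 1; 2; 5]| <= 2 by rewrite b0.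
have k_le : #|completions [:: 3; 4; 5]| <= 3 by rewrite k0.
exact: (@blue_pair 1 2 5 3 4 _ _ b_le k_le isT isT isT isT isT).
Qed.

End ConsecutiveEdges.

Theorem lemma2p3 (N : nat) (red : {set 'I_N} -> bool) (s : seq 'I_N) (n : nat)
    (W : {set 'I_N}) :
  0 < N ->
  red_loose_path red s n ->
  [disjoint W & [set x in s]] ->
  4 <= #|W| ->
  maximal_wrt red s n W ->
  forall j, 1 <= j -> j + 1 <= n ->
  exists (x y a1 a2 a3 a4 a5 : 'I_N),
    [/\ x \in W, y \in W, x != y,
        uniq [:: a1; a2; a3; a4; a5] &
        all (fun a => a \in pedge s j :|: pedge s j.+1) [:: a1; a2; a3; a4; a5]] /\
    [/\ ~~ red [set x; a1; a2; a3],
        ~~ red [set a3; a4; a5; y],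
        (exists v, [/\ v \in pedge s j.+1, v \notin pedge s j &
                       v \notin [:: a1; a2; a3; a4; a5]]) &
        exists W1 W2 : {set 'I_N},
          [/\ W1 \subset W, W2 \subset W, #|W| - 2 <= #|W1|, #|W| - 3 <= #|W2| &
              forall x' y', x' \in W1 -> y' \in W2 -> x' != y' ->
                ~~ red (([set x; a1; a2; a3] :\ x) :|: [set x']) /\
                ~~ red (([set a3; a4; a5; y] :\ y) :|: [set y'])]].
Proof.
move=> N_gt0 [s_uniq size_s s_red] W_s W_ge4 s_max j j_gt0 j_lt_n.
rewrite addn1 in j_lt_n.
exact: (blue_two_path_holds (Ordinal N_gt0) s_uniq size_s s_red W_s s_max j_gt0 j_lt_n W_ge4).
Qed.
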